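(* Let $C$ be the plane affine curve over $\mathbb{R}$ with equation $x_1^2+x_2^2=1$ and $V=C\times\mathbb{A}^1$, so $\mathbb{R}[V]=\mathbb{R}[C][y]$. Let $f\in\mathbb{R}[V]$ and $b\in\mathbb{R}[C]$ be sums of squares (in $\mathbb{R}[V]$ and $\mathbb{R}[C]$ respectively), and assume that $b$ has only real zeros on $C$ (i.e. all zeros of $b$ in $C(\mathbb{C})$ lie in $C(\mathbb{R})$). If there is $g\in\mathbb{R}[V]$ with $f=bg$, then $g$ is a sum of squares in $\mathbb{R}[V]$. *)

From HB Require Import structures.
From mathcomp Require Import all_boot all_order all_algebra.
From mathcomp Require Import mpoly.
From mathcomp Require Import complex.
From mathcomp Require Import reals.
Set Implicit Arguments. Unset Strict Implicit. Unset Printing Implicit Defensive.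
Import Order.TTheory GRing.Theory Num.Theory.
Local Open Scope ring_scope.

(* R[x1,x2] : x1 = 'X_0, x2 = 'X_1 *)
Notation RX2 R := {mpoly R[2]}.

Definition circ (R : realType) : RX2 R :=
  'X_(0 : 'I_2) ^+ 2 + 'X_(1 : 'I_2) ^+ 2 - 1.

(* equality in R[C] = R[x1,x2]/(x1^2+x2^2-1) *)
Definition eqC (R : realType) (p q : RX2 R) : Prop :=
  exists h : RX2 R, p - q = h * circ R.

(* R[V] = R[C][y], represented by {poly R[x1,x2]}; the ideal of V is
   generated by the constant polynomial circ. *)
Definition eqV (R : realType) (p q : {poly RX2 R}) : Prop :=
  exists h : {poly RX2 R}, p - q = h * (circ R)%:P.

Definition sos_C (R : realType) (b : RX2 R) : Prop :=
  exists s : seq (RX2 R), eqC b (\sum_(t <- s) t ^+ 2).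

Definition sos_V (R : realType) (f : {poly RX2 R}) : Prop :=
  exists s : seq {poly RX2 R}, eqV f (\sum_(t <- s) t ^+ 2).

Definition on_C_cplx (R : realType) (z : 'I_2 -> R[i]) : Prop :=
  z 0 ^+ 2 + z 1 ^+ 2 = 1.

Definition evalC (R : realType) (b : RX2 R) (z : 'I_2 -> R[i]) : R[i] :=
  mmap (real_complex R) z b.

Definition only_real_zeros (R : realType) (b : RX2 R) : Prop :=
  forall z : 'I_2 -> R[i], on_C_cplx z -> evalC b z = 0 ->
    forall k : 'I_2, complex.Im (z k) = 0.

(* Write R[C] = R[x1] + x2 R[x1] and attach to b = B0(x1) + x2 B1(x1) its norm
   N(b) = B0^2 - (1 - x1^2) B1^2, which is multiplicative; we induct on the degree of N(b).
   If N(b) is constant then b is a positive constant modulo the circle and g = f / b.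
   Otherwise a complex root a of N(b) yields a zero (a, s) of b on C(C), which by
   hypothesis is a real point p.  Every square in b vanishes at p and every square in f
   vanishes on {p} x A^1, and the square of a polynomial vanishing at p is, modulo the
   circle, the tangent line L = 1 - p1 x1 - p2 x2 times a sum of two squares.  Hence
   b = L b' and f = L f' with b', f' sums of squares; L is not a zero divisor on C (its
   norm is (x1 - p1)^2), so f' = b' g, and N(b) = (x1 - p1)^2 N(b'). *)

From HB Require Import structures.
From mathcomp Require Import all_boot all_order all_algebra.
From mathcomp Require Import mpoly.
From mathcomp Require Import complex.
From mathcomp Require Import reals.
From mathcomp Require Import ring lra.
Import Order.TTheory GRing.Theory Num.Theory.
Set Implicit Arguments. Unset Strict Implicit. Unset Printing Implicit Defensive.
Local Open Scope ring_scope.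

Section Congruence.
Variables (S : comNzRingType) (c : S).

Definition eqmod (p q : S) := exists h : S, p - q = h * c.

Lemma eqmod_refl p : eqmod p p.
Proof. by exists 0; rewrite subrr mul0r. Qed.

Lemma eqmod_sym p q : eqmod p q -> eqmod q p.
Proof. by move=> [h hpq]; exists (- h); rewrite mulNr -hpq opprB. Qed.

Lemma eqmod_trans p q r : eqmod p q -> eqmod q r -> eqmod p r.
Proof. by move=> [h hpq] [k hqr]; exists (h + k); rewrite mulrDl -hpq -hqr; ring. Qed.

Lemma eqmodD p q p' q' : eqmod p q -> eqmod p' q' -> eqmod (p + p') (q + q').
Proof. by move=> [h hpq] [k hpq']; exists (h + k); rewrite mulrDl -hpq -hpq'; ring. Qed.

Lemma eqmodM p q p' q' : eqmod p q -> eqmod p' q' -> eqmod (p * p') (q * q').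
Proof.
move=> [h hpq] [k hpq']; exists (h * p' + q * k).
have -> : p * p' - q * q' = (p - q) * p' + q * (p' - q') by ring.
by rewrite hpq hpq'; ring.
Qed.

Lemma eqmod_sub0 p q : eqmod (p - q) 0 <-> eqmod p q.
Proof. by rewrite /eqmod subr0. Qed.

End Congruence.

Lemma eqmod_rmorph (S T : comNzRingType) (phi : {rmorphism S -> T}) (c p q : S) :
  eqmod c p q -> eqmod (phi c) (phi p) (phi q).
Proof. by move=> [h hpq]; exists (phi h); rewrite -rmorphB hpq rmorphM. Qed.

Lemma rmorph_eqmod (S : comNzRingType) (T : nzRingType) (phi : {rmorphism S -> T})
    (c p q : S) :
  phi c = 0 -> eqmod c p q -> phi p = phi q.
Proof.
by move=> phi_c [h hpq]; apply/eqP; rewrite -subr_eq0 -rmorphB hpq rmorphM phi_c mulr0.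
Qed.

Lemma eqmod_poly_coef (S : comNzRingType) (c : S) (H : {poly S}) :
  (forall i, eqmod c H`_i 0) -> eqmod c%:P H 0.
Proof.
move=> H_mod.
have coef_mod i : exists k : S, H`_i == k * c.
  by have [k] := H_mod i; rewrite subr0 => ->; exists k.
exists (\poly_(i < size H) xchoose (coef_mod i)).
apply/polyP => i; rewrite subr0 coefMC coef_poly; case: ltnP => hi.
  exact/eqP/(xchooseP (coef_mod i)).
by rewrite mul0r nth_default.
Qed.

Lemma big_ord2 (S : nmodType) (F : 'I_2 -> S) : \sum_i F i = F 0 + F 1.
Proof. by rewrite big_ord_recl big_ord1; congr (F _ + F _); apply: val_inj. Qed.

Lemma sum_sqr_eq0 (F : realDomainType) (I : eqType) (s : seq I) (f : I -> F) :
  \sum_(i <- s) f i ^+ 2 = 0 -> {in s, forall i, f i = 0}.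
Proof.
move/eqP; rewrite psumr_eq0 => [/allP s0 i /s0|i _]; last exact: sqr_ge0.
by rewrite sqrf_eq0 => /eqP.
Qed.

Lemma inj_roots_poly_eq0 (F : idomainType) (q : {poly F}) (a : nat -> F) :
  injective a -> (forall j, q.[a j] = 0) -> q = 0.
Proof.
move=> a_inj q_a; apply: (@roots_geq_poly_eq0 _ q [seq a j | j <- iota 0 (size q)]).
- by apply/allP => _ /mapP [j _ ->]; apply/rootP.
- by rewrite map_inj_uniq ?iota_uniq.
- by rewrite size_map size_iota.
Qed.

Lemma sum_sqr_poly_eq0 (F : realDomainType) (I : eqType) (s : seq I) (f : I -> {poly F}) :
  \sum_(i <- s) f i ^+ 2 = 0 -> {in s, forall i, f i = 0}.
Proof.
move=> s0 i si; apply: (@inj_roots_poly_eq0 _ _ (fun j => j%:R)) => [j k /eqP|j].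
  by rewrite eqr_nat => /eqP.
have /= := congr1 (horner^~ j%:R) s0; rewrite horner0 horner_sum.
under eq_bigr => u _ do rewrite horner_exp.
by move/sum_sqr_eq0; apply.
Qed.

Lemma size_polyD_lead_ge0 (F : numDomainType) (P Q : {poly F}) :
  0 <= lead_coef P -> 0 <= lead_coef Q -> size (P + Q) = maxn (size P) (size Q).
Proof.
move=> P_ge0 Q_ge0; case: (ltngtP (size P) (size Q)) => PQ.
- by rewrite addrC size_polyDl // (maxn_idPr (ltnW PQ)).
- by rewrite size_polyDl // (maxn_idPl (ltnW PQ)).
have [P0|P0] := eqVneq P 0; first by move: PQ; rewrite P0 add0r => ->.
have top : (P + Q)`_(size P).-1 = lead_coef P + lead_coef Q by rewrite coefD /lead_coef -PQ.
have top_gt0 : 0 < lead_coef P + lead_coef Q.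
  by rewrite ltr_wpDr // lt_def lead_coef_eq0 P0.
apply/eqP; rewrite eqn_leq (leq_trans (size_polyD P Q)) -?PQ ?maxnn //=.
have sP_gt0 : (0 < size P)%N by rewrite size_poly_gt0.
rewrite leqNgt; apply/negP => small.
have : (P + Q)`_(size P).-1 = 0 by rewrite nth_default // -ltnS prednK.
by rewrite top => top0; move: top_gt0; rewrite top0 ltxx.
Qed.

Lemma mpoly_subring_ind (n : nat) (R : nzRingType) (P : {mpoly R[n]} -> Prop) :
    (forall c, P c%:MP) -> (forall i, P 'X_i) ->
    (forall p q, P p -> P q -> P (p + q)) -> (forall p q, P p -> P q -> P (p * q)) ->
  forall p, P p.
Proof.
move=> PC PX PD PM; elim/mpolyind => [|c m r _ _ Pr]; first by rewrite -mpolyC0.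
apply: (PD _ _ _ Pr); rewrite -mul_mpolyC mpolyXE_id; apply: (PM) => //.
apply: (big_ind P) => [|p q|i _]; [by rewrite -mpolyC1 | exact: PM |].
by elim: (m i) => [|k IHk]; [rewrite expr0 -mpolyC1 | rewrite exprS; apply: PM].
Qed.

Section MpolyVanishing.
Variables (n : nat) (R : comNzRingType) (p : 'I_n -> R).
Local Notation M := {mpoly R[n]}.

Lemma mpoly_sub_meval (q : M) :
  exists a : 'I_n -> M, q - (q.@[p])%:MP = \sum_i ('X_i - (p i)%:MP) * a i.
Proof.
elim/mpoly_subring_ind: q => [c|i|q1 q2 [a1 h1] [a2 h2]|q1 q2 [a1 h1] [a2 h2]].
- by exists (fun=> 0); rewrite mevalC subrr big1 // => i _; rewrite mulr0.
- exists (fun j => (i == j)%:R); rewrite mevalXU (bigD1 i) //= eqxx mulr1.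
  by rewrite big1 ?addr0 // => j; rewrite eq_sym => /negPf ->; rewrite mulr0.
- exists (fun i => a1 i + a2 i).
  have -> : q1 + q2 - ((q1 + q2).@[p])%:MP =
      (q1 - (q1.@[p])%:MP) + (q2 - (q2.@[p])%:MP) by rewrite mevalD rmorphD; ring.
  by rewrite h1 h2 -big_split; apply: eq_bigr => i _; rewrite mulrDr.
- exists (fun i => a1 i * q2 + (q1.@[p])%:MP * a2 i).
  have -> : q1 * q2 - ((q1 * q2).@[p])%:MP =
      (q1 - (q1.@[p])%:MP) * q2 + (q1.@[p])%:MP * (q2 - (q2.@[p])%:MP).
    by rewrite mevalM rmorphM; ring.
  rewrite h1 h2 mulr_suml mulr_sumr -big_split.
  by apply: eq_bigr => i _ /=; ring.
Qed.

Lemma poly_meval_eq0 (t : {poly M}) : map_poly (meval p) t = 0 ->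
  exists a : 'I_n -> {poly M}, t = \sum_i ('X_i - (p i)%:MP)%:P * a i.
Proof.
move=> t_p.
have coef_ideal j : exists a : {ffun 'I_n -> M}, t`_j == \sum_i ('X_i - (p i)%:MP) * a i.
  have [a ha] := mpoly_sub_meval t`_j; exists [ffun i => a i].
  have : (map_poly (meval p) t)`_j = 0 by rewrite t_p coef0.
  rewrite coef_map /= => tj_p; rewrite tj_p mpolyC0 subr0 in ha.
  by rewrite ha; apply/eqP/eq_bigr => i _; rewrite ffunE.
exists (fun i => \poly_(j < size t) xchoose (coef_ideal j) i).
apply/polyP => j; rewrite coef_sum; case: (ltnP j (size t)) => hj.
  rewrite (eqP (xchooseP (coef_ideal j))).
  by apply: eq_bigr => i _; rewrite coefCM coef_poly hj.
rewrite nth_default // big1 // => i _.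
by rewrite coefCM coef_poly ltnNge hj mulr0.
Qed.

End MpolyVanishing.

Section TangentSquares.
Variables (S : comNzRingType) (x y px py half : S).
Hypotheses (p_on_circle : px ^+ 2 + py ^+ 2 = 1) (halfE : half + half = 1).
Local Notation circle := (x ^+ 2 + y ^+ 2 - 1).
Local Notation tangent := (1 - px * x - py * y).

(* Rotate coordinates so that p becomes (1, 0): with u = px x + py y, v = px y - py x and
   (a, b) rotated likewise, the tangent is 1 - u and the ring identity
   2 ((u - 1) a + v b)^2 = (1 - u) (P^2 + Q^2) + (u^2 + v^2 - 1) W
   holds for P = (1 - u) a - v b, Q = v a - (1 + u) b and a suitable W. *)
Lemma sqr_tangent_ideal a b : exists s1 s2 : S,
  eqmod circle (((x - px) * a + (y - py) * b) ^+ 2) (tangent * (s1 ^+ 2 + s2 ^+ 2)).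
Proof.
pose u := px * x + py * y; pose v := - py * x + px * y.
pose a' := px * a + py * b; pose b' := - py * a + px * b.
pose P := (1 - u) * a' - v * b'; pose Q := v * a' - (1 + u) * b'.
pose W := 2%:R * b' ^+ 2 - (1 - u) * (a' ^+ 2 + b' ^+ 2).
have rotate : (x - px) * a + (y - py) * b = (u - 1) * a' + v * b'.
  have -> : (u - 1) * a' + v * b' = (px ^+ 2 + py ^+ 2) * (x * a + y * b) - px * a - py * b.
    by rewrite /u /v /a' /b'; ring.
  by rewrite p_on_circle; ring.
have rotate_circle : u ^+ 2 + v ^+ 2 - 1 = circle.
  have -> : u ^+ 2 + v ^+ 2 - 1 = (px ^+ 2 + py ^+ 2) * (x ^+ 2 + y ^+ 2) - 1.
    by rewrite /u /v; ring.
  by rewrite p_on_circle mul1r.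
have key : 2%:R * ((u - 1) * a' + v * b') ^+ 2 =
    (1 - u) * (P ^+ 2 + Q ^+ 2) + (u ^+ 2 + v ^+ 2 - 1) * W by rewrite /P /Q /W; ring.
have halve e : e = half * (2%:R * e) by rewrite mulrA mulr_natr mulr2n halfE mul1r.
have halves : (half * (P + Q)) ^+ 2 + (half * (P - Q)) ^+ 2 = half * (P ^+ 2 + Q ^+ 2).
  have -> : (half * (P + Q)) ^+ 2 + (half * (P - Q)) ^+ 2 =
      half * (half + half) * (P ^+ 2 + Q ^+ 2) by ring.
  by rewrite halfE mulr1.
exists (half * (P + Q)), (half * (P - Q)), (half * W).
have -> : tangent = 1 - u by rewrite /u; ring.
rewrite rotate [X in X - _]halve key halves -rotate_circle; ring.
Qed.

Lemma sos_tangent_ideal (s : seq S) :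
    {in s, forall t, exists a b, t = (x - px) * a + (y - py) * b} ->
  exists s' : seq S,
    eqmod circle (\sum_(t <- s) t ^+ 2) (tangent * \sum_(t <- s') t ^+ 2).
Proof.
elim: s => [|t s IH] s_ideal.
  by exists [::]; rewrite !big_nil mulr0; apply: eqmod_refl.
have [|s' hs'] := IH; first by move=> u us; apply: s_ideal; rewrite inE us orbT.
have [a [b ->]] := s_ideal t (mem_head _ _).
have [s1 [s2 hab]] := sqr_tangent_ideal a b.
exists [:: s1, s2 & s']; rewrite !big_cons.
have -> : tangent * (s1 ^+ 2 + (s2 ^+ 2 + \sum_(t <- s') t ^+ 2)) =
    tangent * (s1 ^+ 2 + s2 ^+ 2) + tangent * \sum_(t <- s') t ^+ 2 by ring.
exact: eqmodD.
Qed.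

End TangentSquares.

Section Circle.
Variable R : realType.
Local Notation M := {mpoly R[2]}.
Local Notation x1 := ('X_(0 : 'I_2) : M).
Local Notation x2 := ('X_(1 : 'I_2) : M).

Definition circ_nf (B0 B1 : {poly R}) : M := horner_alg x1 B0 + x2 * horner_alg x1 B1.

Definition circ_norm (B0 B1 : {poly R}) : {poly R} := B0 ^+ 2 - (1 - 'X ^+ 2) * B1 ^+ 2.

Lemma mmap_horner_alg (S : comNzRingType) (phi : {rmorphism R -> S}) (z : 'I_2 -> S) i B :
  mmap phi z (horner_alg 'X_i B : M) = (map_poly phi B).[z i].
Proof.
rewrite /horner_alg /horner_morph -horner_map /= mmapX mmap1U -map_poly_comp.
by congr (_.[_]); apply: eq_map_poly => c /=; rewrite alg_mpolyC mmapC.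
Qed.

Lemma mmap_circ (S : comNzRingType) (phi : {rmorphism R -> S}) (z : 'I_2 -> S) :
  mmap phi z (circ R) = z 0 ^+ 2 + z 1 ^+ 2 - 1.
Proof. by rewrite /circ rmorphB rmorphD !rmorphXn rmorph1 /= !mmapX !mmap1U. Qed.

Lemma mmap_circ_nf (S : comNzRingType) (phi : {rmorphism R -> S}) (z : 'I_2 -> S) B0 B1 :
  mmap phi z (circ_nf B0 B1) = (map_poly phi B0).[z 0] + z 1 * (map_poly phi B1).[z 0].
Proof. by rewrite rmorphD rmorphM /= !mmap_horner_alg mmapX mmap1U. Qed.

Lemma meval_circ (p : 'I_2 -> R) : (circ R).@[p] = p 0 ^+ 2 + p 1 ^+ 2 - 1.
Proof. exact: mmap_circ. Qed.

Lemma meval_circ_nf (p : 'I_2 -> R) B0 B1 :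
  (circ_nf B0 B1).@[p] = B0.[p 0] + p 1 * B1.[p 0].
Proof. by rewrite /meval mmap_circ_nf !map_poly_id. Qed.

Lemma circ_nf_mul A0 A1 B0 B1 :
  eqmod (circ R) (circ_nf A0 A1 * circ_nf B0 B1)
      (circ_nf (A0 * B0 + (1 - 'X ^+ 2) * (A1 * B1)) (A0 * B1 + A1 * B0)).
Proof.
exists (horner_alg x1 A1 * horner_alg x1 B1).
rewrite /circ_nf /circ !(rmorphD, rmorphM, rmorphB, rmorphN, rmorphXn, rmorph1) /=.
by rewrite horner_algX; ring.
Qed.

Lemma circ_nf_exists (q : M) : exists B0 B1, eqmod (circ R) q (circ_nf B0 B1).
Proof.
elim/mpoly_subring_ind: q => [c|i|q1 q2 [A0 [A1 hA]] [B0 [B1 hB]]|q1 q2 [A0 [A1 hA]] [B0 [B1 hB]]].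
- exists c%:P, 0; rewrite /circ_nf rmorph0 mulr0 addr0 horner_algC alg_mpolyC.
  exact: eqmod_refl.
- have [->|->] : i = 0 \/ i = 1 by case: i => [[|[|//]] hk]; [left|right]; apply/val_inj.
    exists 'X, 0; rewrite /circ_nf rmorph0 mulr0 addr0 horner_algX; exact: eqmod_refl.
  exists 0, 1; rewrite /circ_nf rmorph0 rmorph1 mulr1 add0r; exact: eqmod_refl.
- exists (A0 + B0), (A1 + B1); apply: eqmod_trans (eqmodD hA hB) _.
  by rewrite /circ_nf !rmorphD; exists 0; rewrite mul0r; ring.
- eexists; eexists; apply: eqmod_trans (eqmodM hA hB) _; exact: circ_nf_mul.
Qed.

Lemma circ_nf_eq0 B0 B1 : eqmod (circ R) (circ_nf B0 B1) 0 -> B0 = 0 /\ B1 = 0.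
Proof.
move=> [h]; rewrite subr0 => hB.
pose a j : R := (j.+2)%:R^-1.
have a_inj : injective a by move=> j k /invr_inj /eqP; rewrite eqr_nat => /eqP [].
have roots j : B0.[a j] = 0 /\ B1.[a j] = 0.
  have a_sqr_lt1 : a j ^+ 2 < 1.
    by rewrite expr_lt1 ?invr_ge0 ?ler0n // invf_lt1 ?ltr0n // ltr1n.
  pose s := Num.sqrt (1 - a j ^+ 2).
  have s_gt0 : 0 < s by rewrite sqrtr_gt0 subr_gt0.
  have at_circle t : t ^+ 2 = s ^+ 2 -> B0.[a j] + t * B1.[a j] = 0.
    move=> ts; have := congr1 (meval (fun i : 'I_2 => [:: a j; t]`_i)) hB.
    rewrite meval_circ_nf mevalM meval_circ /= ts sqr_sqrtr ?subr_ge0 ?ltW //.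
    by rewrite [_ + (1 - _)]addrC subrK subrr mulr0.
  have hp := at_circle s erefl; have hm := at_circle (- s) (sqrrN s).
  have B0a : B0.[a j] = 0 by lra.
  split=> //; move/eqP: hp; rewrite B0a add0r mulf_eq0 gt_eqF //=.
  by move/eqP.
by split; apply: (inj_roots_poly_eq0 a_inj) => j; have [] := roots j.
Qed.

Lemma circ_nf_inj B0 B1 C0 C1 :
  eqmod (circ R) (circ_nf B0 B1) (circ_nf C0 C1) -> B0 = C0 /\ B1 = C1.
Proof.
move=> [h hBC]; have [] : B0 - C0 = 0 /\ B1 - C1 = 0.
  by apply: circ_nf_eq0; exists h; rewrite subr0 -hBC /circ_nf !rmorphB; ring.
by move/eqP; rewrite subr_eq0 => /eqP -> /eqP; rewrite subr_eq0 => /eqP ->.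
Qed.

Lemma circ_normM A0 A1 B0 B1 :
  circ_norm (A0 * B0 + (1 - 'X ^+ 2) * (A1 * B1)) (A0 * B1 + A1 * B0) =
  circ_norm A0 A1 * circ_norm B0 B1.
Proof. by rewrite /circ_norm; ring. Qed.

Lemma size_circ_norm_le1 B0 B1 :
  (size (circ_norm B0 B1) <= 1)%N -> B1 = 0 /\ (size B0 <= 1)%N.
Proof.
have -> : circ_norm B0 B1 = B0 * B0 + ('X^2 - 1%:P) * (B1 * B1).
  by rewrite /circ_norm polyC1; ring.
have lead_X2 : lead_coef ('X^2 - 1%:P : {poly R}) = 1.
  by rewrite lead_coefDl ?lead_coefXn // size_polyXn size_polyN size_polyC; case: eqP.
rewrite size_polyD_lead_ge0; first last.
- by rewrite lead_coefM lead_X2 mul1r lead_coefM -expr2 sqr_ge0.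
- by rewrite lead_coefM -expr2 sqr_ge0.
rewrite geq_max => /andP [B0_le1 B1_le1]; split.
  apply/eqP/negPn/negP => B1n0; move: B1_le1.
  rewrite size_mul ?mulf_neq0 //; last by rewrite -lead_coef_eq0 lead_X2 oner_eq0.
  by rewrite (size_mul B1n0 B1n0) size_XnsubC.
have [->|B0n0] := eqVneq B0 0; first by rewrite size_poly0.
by move: B0_le1; rewrite size_mul //; case: (size B0) => [|[|k]] //; rewrite addnS.
Qed.

Lemma meval_eqmod_circ (p : 'I_2 -> R) (q q' : M) :
  p 0 ^+ 2 + p 1 ^+ 2 = 1 -> eqmod (circ R) q q' -> q.@[p] = q'.@[p].
Proof.
by move=> p_on_circle; apply: rmorph_eqmod; rewrite /= meval_circ p_on_circle subrr.
Qed.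

Lemma evalC_eqmod_circ (z : 'I_2 -> R[i]) (q q' : M) :
  on_C_cplx z -> eqmod (circ R) q q' -> evalC q z = evalC q' z.
Proof. by move=> z_on_C; apply: rmorph_eqmod; rewrite /= mmap_circ z_on_C subrr. Qed.

Lemma only_real_zeros_neq0 (b : M) : only_real_zeros b -> ~ eqmod (circ R) b 0.
Proof.
move=> real_zeros [h]; rewrite subr0 => hb.
pose z (i : 'I_2) : R[i] := [:: complex.sqrtc 2%:R; 'i%C]`_i.
have z_on_C : on_C_cplx z by rewrite /on_C_cplx /= complex.sqr_sqrtc complex.sqr_i; ring.
have := real_zeros z z_on_C; rewrite /evalC hb rmorphM /= mmap_circ z_on_C subrr mulr0.
by move=> /(_ erefl 1) /eqP; rewrite oner_eq0.
Qed.

Lemma circ_norm_root_real_zero (b : M) B0 B1 :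
    only_real_zeros b -> eqmod (circ R) b (circ_nf B0 B1) -> size (circ_norm B0 B1) != 1 ->
  exists2 p : 'I_2 -> R, p 0 ^+ 2 + p 1 ^+ 2 = 1 & b.@[p] = 0.
Proof.
move=> real_zeros b_nf size_N.
have /closed_rootP [a Na] : size (map_poly (real_complex R) (circ_norm B0 B1)) != 1.
  by rewrite size_map_poly.
set u := (map_poly (real_complex R) B0).[a]; set v := (map_poly (real_complex R) B1).[a].
have uv : u ^+ 2 = (1 - a ^+ 2) * v ^+ 2.
  move/rootP: Na; rewrite /circ_norm !(rmorphB, rmorphM, rmorphXn, rmorph1) /= map_polyX.
  by rewrite !hornerE => /eqP; rewrite subr_eq0 => /eqP.
have [s [s_sqr us]] : exists s : R[i], s ^+ 2 = 1 - a ^+ 2 /\ u + s * v = 0.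
  have [v0|v_neq0] := eqVneq v 0.
    exists (complex.sqrtc (1 - a ^+ 2)); split; first exact: complex.sqr_sqrtc.
    move: uv; rewrite v0 expr0n mulr0 => /eqP; rewrite sqrf_eq0 => /eqP ->.
    by rewrite mulr0 addr0.
  exists (- u / v); split; last by rewrite mulfVK // subrr.
  by rewrite exprMn exprVn sqrrN uv mulfK // expf_neq0.
pose z (i : 'I_2) := [:: a; s]`_i.
have z_on_C : on_C_cplx z by rewrite /on_C_cplx /z /= s_sqr; ring.
have bz : evalC b z = 0.
  have [h hb] := b_nf; have -> : b = circ_nf B0 B1 + h * circ R by rewrite -hb; ring.
  by rewrite /evalC rmorphD rmorphM /= mmap_circ_nf mmap_circ z_on_C subrr mulr0 addr0.
have real (x : R[i]) : complex.Im x = 0 -> x = (complex.Re x)%:C%C.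
  by case: x => ? ? /= ->.
have a_real : a = (complex.Re a)%:C%C := real _ (real_zeros z z_on_C bz 0).
have s_real : s = (complex.Re s)%:C%C := real _ (real_zeros z z_on_C bz 1).
pose p (i : 'I_2) := [:: complex.Re a; complex.Re s]`_i.
have p_on_circle : p 0 ^+ 2 + p 1 ^+ 2 = 1.
  by apply: complexI; rewrite rmorphD !rmorphXn rmorph1 /= -a_real -s_real.
exists p => //; rewrite (meval_eqmod_circ p_on_circle b_nf) meval_circ_nf /=.
by apply: complexI; rewrite rmorph0 rmorphD rmorphM -!horner_map /= -a_real -s_real.
Qed.

Section Tangent.
Variable p : 'I_2 -> R.
Hypothesis p_on_circle : p 0 ^+ 2 + p 1 ^+ 2 = 1.

Definition tangent : M := 1 - (p 0)%:MP * x1 - (p 1)%:MP * x2.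

Lemma tangent_circ_nf : tangent = circ_nf (1 - (p 0)%:P * 'X) (- (p 1)%:P).
Proof.
rewrite /circ_nf rmorphB rmorph1 rmorphM rmorphN /= !horner_algC horner_algX !alg_mpolyC.
by rewrite /tangent; ring.
Qed.

Lemma circ_norm_tangent :
  circ_norm (1 - (p 0)%:P * 'X) (- (p 1)%:P) = ('X - (p 0)%:P) ^+ 2.
Proof.
have -> : circ_norm (1 - (p 0)%:P * 'X) (- (p 1)%:P) =
    ('X - (p 0)%:P) ^+ 2 + ((p 0 ^+ 2 + p 1 ^+ 2)%:P - 1) * ('X ^+ 2 - 1).
  by rewrite /circ_norm rmorphD !rmorphXn; ring.
by rewrite p_on_circle subrr mul0r addr0.
Qed.

Lemma circ_norm_tangent_factor (b b' : M) B0 B1 C0 C1 :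
    eqmod (circ R) b (circ_nf B0 B1) -> eqmod (circ R) b' (circ_nf C0 C1) ->
    eqmod (circ R) b (tangent * b') ->
  circ_norm B0 B1 = ('X - (p 0)%:P) ^+ 2 * circ_norm C0 C1.
Proof.
rewrite tangent_circ_nf => b_nf b'_nf b_tan.
have := eqmod_trans b_tan (eqmod_trans (eqmodM (eqmod_refl _ _) b'_nf) (circ_nf_mul _ _ _ _)).
move/(eqmod_trans (eqmod_sym b_nf))/circ_nf_inj => [-> ->].
by rewrite circ_normM circ_norm_tangent.
Qed.

Lemma tangent_regular q :
  eqmod (circ R) (tangent * q) 0 -> eqmod (circ R) q 0.
Proof.
move=> tq0; have [Q0 [Q1 hQ]] := circ_nf_exists q.
pose conj_tangent : M := 1 - (p 0)%:MP * x1 + (p 1)%:MP * x2.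
have tangent_norm : eqmod (circ R) (conj_tangent * tangent) ((x1 - (p 0)%:MP) ^+ 2).
  exists (- (p 1)%:MP ^+ 2).
  have -> : conj_tangent * tangent - (x1 - (p 0)%:MP) ^+ 2 =
      - (p 1)%:MP ^+ 2 * circ R + ((p 0)%:MP ^+ 2 + (p 1)%:MP ^+ 2 - 1) * (x1 ^+ 2 - 1).
    by rewrite /conj_tangent /tangent /circ; ring.
  by rewrite -!rmorphXn -rmorphD p_on_circle rmorph1 subrr mul0r addr0.
have : eqmod (circ R) (circ_nf (('X - (p 0)%:P) ^+ 2 * Q0) (('X - (p 0)%:P) ^+ 2 * Q1)) 0.
  have -> : circ_nf (('X - (p 0)%:P) ^+ 2 * Q0) (('X - (p 0)%:P) ^+ 2 * Q1) =
      (x1 - (p 0)%:MP) ^+ 2 * circ_nf Q0 Q1.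
    rewrite /circ_nf !rmorphM /= rmorphB /= horner_algX horner_algC alg_mpolyC.
    by ring.
  apply: eqmod_trans (eqmodM (eqmod_sym tangent_norm) (eqmod_sym hQ)) _.
  by rewrite -mulrA -(mulr0 conj_tangent); apply: eqmodM (eqmod_refl _ _) tq0.
move/circ_nf_eq0 => [/eqP + /eqP]; rewrite !mulf_eq0 polyXsubC_eq0 /=.
move=> /eqP Q00 /eqP Q10; apply: eqmod_trans hQ _.
by rewrite Q00 Q10 /circ_nf !rmorph0 mulr0 addr0; apply: eqmod_refl.
Qed.

Lemma tangent_regular_poly (H : {poly M}) :
  eqmod (circ R)%:P (tangent%:P * H) 0 -> eqmod (circ R)%:P H 0.
Proof.
move=> [K hK]; apply: eqmod_poly_coef => i; apply: tangent_regular.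
by exists K`_i; have := congr1 (fun P : {poly M} => P`_i) hK; rewrite !subr0 coefCM coefMC.
Qed.

Lemma only_real_zeros_tangent_factor (b b' : M) :
  eqmod (circ R) b (tangent * b') -> only_real_zeros b -> only_real_zeros b'.
Proof.
move=> b_tan real_zeros z z_on_C b'z; apply: (real_zeros z z_on_C).
by rewrite (evalC_eqmod_circ z_on_C b_tan) /evalC rmorphM /= -/(evalC b' z) b'z mulr0.
Qed.

Let half_half : (2^-1 : R) + 2^-1 = 1.
Proof. lra. Qed.

Lemma sos_C_tangent_factor (b : M) (s : seq M) :
    b.@[p] = 0 -> eqmod (circ R) b (\sum_(t <- s) t ^+ 2) ->
  exists s' : seq M, eqmod (circ R) b (tangent * \sum_(t <- s') t ^+ 2).
Proof.
move=> bp0 b_sos.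
have s_p : {in s, forall t, t.@[p] = 0}.
  have := meval_eqmod_circ p_on_circle b_sos; rewrite bp0 rmorph_sum /=.
  by under eq_bigr => t _ do rewrite rmorphXn; move/esym/sum_sqr_eq0.
have p_on_circleC : ((p 0)%:MP : M) ^+ 2 + (p 1)%:MP ^+ 2 = 1.
  by rewrite -!rmorphXn -rmorphD p_on_circle rmorph1.
have halfC : ((2^-1 : R)%:MP : M) + (2^-1)%:MP = 1 by rewrite -rmorphD half_half rmorph1.
have [|s' s_tan] := sos_tangent_ideal (x := x1) (y := x2) p_on_circleC halfC (s := s).
  move=> t /s_p tp0; have [a] := mpoly_sub_meval p t.
  by rewrite tp0 mpolyC0 subr0 big_ord2 => ->; exists (a 0), (a 1).
by exists s'; apply: eqmod_trans b_sos s_tan.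
Qed.

Lemma sos_V_tangent_factor (f : {poly M}) (s : seq {poly M}) :
    map_poly (meval p) f = 0 -> eqmod (circ R)%:P f (\sum_(t <- s) t ^+ 2) ->
  exists s' : seq {poly M}, eqmod (circ R)%:P f (tangent%:P * \sum_(t <- s') t ^+ 2).
Proof.
move=> fp0 f_sos.
have s_p : {in s, forall t, map_poly (meval p) t = 0}.
  have := rmorph_eqmod (phi := map_poly (meval p)) _ f_sos.
  rewrite /= map_polyC /= meval_circ p_on_circle subrr polyC0 fp0 rmorph_sum => /(_ erefl).
  under eq_bigr => u _ do rewrite rmorphXn.
  by move/esym/sum_sqr_poly_eq0.
have p_on_circleP : ((p 0)%:MP%:P : {poly M}) ^+ 2 + (p 1)%:MP%:P ^+ 2 = 1.
  by rewrite -!rmorphXn -!rmorphD p_on_circle !rmorph1.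
have halfP : ((2^-1 : R)%:MP%:P : {poly M}) + (2^-1)%:MP%:P = 1.
  by rewrite -!rmorphD half_half !rmorph1.
have [|s' s_tan] := sos_tangent_ideal (x := x1%:P) (y := x2%:P) p_on_circleP halfP (s := s).
  move=> t /s_p /(poly_meval_eq0 (p := p)) [a ->].
  by rewrite big_ord2 !rmorphB; exists (a 0), (a 1).
exists s'; apply: eqmod_trans f_sos _.
have -> : tangent%:P = 1 - (p 0)%:MP%:P * x1%:P - (p 1)%:MP%:P * x2%:P.
  by rewrite /tangent !rmorphB !rmorphM rmorph1.
by rewrite /circ rmorphB rmorphD !rmorphXn rmorph1.
Qed.

End Tangent.

Lemma sos_div_const (b : M) B0 B1 (f g : {poly M}) :
    (size (circ_norm B0 B1) <= 1)%N -> eqmod (circ R) b (circ_nf B0 B1) ->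
    sos_C b -> only_real_zeros b -> sos_V f -> eqmod (circ R)%:P f (b%:P * g) ->
  sos_V g.
Proof.
move=> size_N b_nf [sb b_sos] real_zeros [sf f_sos] fg.
have [B1_0 B0_const] := size_circ_norm_le1 size_N.
set k := B0`_0.
have b_k : eqmod (circ R) b k%:MP.
  move: b_nf; rewrite (size1_polyC B0_const) B1_0 /circ_nf rmorph0 mulr0 addr0.
  by rewrite horner_algC alg_mpolyC.
have k_neq0 : k != 0.
  by apply/eqP => k0; apply: (only_real_zeros_neq0 real_zeros); rewrite -(mpolyC0 2) -k0.
have k_gt0 : 0 < k.
  rewrite lt_def k_neq0 /=.
  pose p (i : 'I_2) : R := [:: 1; 0]`_i.
  have p_on_circle : p 0 ^+ 2 + p 1 ^+ 2 = 1 by rewrite /p /= expr1n expr0n addr0.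
  rewrite -(mevalC p k) -(meval_eqmod_circ p_on_circle b_k).
  rewrite (meval_eqmod_circ p_on_circle b_sos) rmorph_sum sumr_ge0 // => t _.
  by rewrite rmorphXn sqr_ge0.
pose c : {poly M} := (Num.sqrt k^-1)%:MP%:P.
exists [seq c * t | t <- sf].
have -> : \sum_(t <- [seq c * t | t <- sf]) t ^+ 2 = (k^-1)%:MP%:P * \sum_(t <- sf) t ^+ 2.
  rewrite big_map mulr_sumr; apply: eq_bigr => t _.
  by rewrite exprMn -!rmorphXn sqr_sqrtr // invr_ge0 ltW.
apply: eqmod_trans _ (eqmodM (eqmod_refl _ _) f_sos).
have kg_f : eqmod (circ R)%:P (k%:MP%:P * g) f.
  apply: eqmod_trans (eqmod_sym fg).
  exact: eqmodM (eqmod_sym (eqmod_rmorph polyC b_k)) (eqmod_refl _ _).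
have -> : g = (k^-1)%:MP%:P * (k%:MP%:P * g).
  by rewrite mulrA -!rmorphM mulVf // !rmorph1 mul1r.
exact: eqmodM (eqmod_refl _ _) kg_f.
Qed.

Lemma sos_div_descent (b : M) B0 B1 (f g : {poly M}) :
    (1 < size (circ_norm B0 B1))%N -> eqmod (circ R) b (circ_nf B0 B1) ->
    sos_C b -> only_real_zeros b -> sos_V f -> eqmod (circ R)%:P f (b%:P * g) ->
  exists (b' : M) (C0 C1 : {poly R}),
    [/\ eqmod (circ R) b' (circ_nf C0 C1),
         (size (circ_norm C0 C1) < size (circ_norm B0 B1))%N,
         sos_C b', only_real_zeros b' &
         exists2 f' : {poly M}, sos_V f' & eqmod (circ R)%:P f' (b'%:P * g)].
Proof.
move=> size_N b_nf [sb b_sos] real_zeros [sf f_sos] fg.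
have [p p_on_circle bp0] := circ_norm_root_real_zero real_zeros b_nf (negbT (gtn_eqF size_N)).
have [sb' b_tan] := sos_C_tangent_factor p_on_circle bp0 b_sos.
have fp0 : map_poly (meval p) f = 0.
  rewrite (rmorph_eqmod (phi := map_poly (meval p)) _ fg) /=; last first.
    by rewrite map_polyC /= meval_circ p_on_circle subrr polyC0.
  by rewrite rmorphM /= map_polyC /= bp0 polyC0 mul0r.
have [sf' f_tan] := sos_V_tangent_factor p_on_circle fp0 f_sos.
set b' := \sum_(t <- sb') t ^+ 2 in b_tan; set f' := \sum_(t <- sf') t ^+ 2 in f_tan.
have [C0 [C1 b'_nf]] := circ_nf_exists b'.
exists b', C0, C1; split => //.
- have N_eq := circ_norm_tangent_factor p_on_circle b_nf b'_nf b_tan.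
  have N'_neq0 : circ_norm C0 C1 != 0.
    by apply: contraTneq size_N => N'0; rewrite N_eq N'0 mulr0 size_poly0.
  rewrite N_eq size_mul ?expf_neq0 ?polyXsubC_eq0 // size_exp_XsubC.
  by rewrite !addSn add0n ltnS leqnSn.
- by exists sb'; apply: eqmod_refl.
- exact: only_real_zeros_tangent_factor b_tan real_zeros.
exists f'; first by exists sf'; apply: eqmod_refl.
apply/eqmod_sub0/(tangent_regular_poly p_on_circle); rewrite mulrBr; apply/eqmod_sub0.
apply: eqmod_trans (eqmod_sym f_tan) _; apply: eqmod_trans fg _.
by rewrite mulrA -rmorphM; apply: eqmodM (eqmod_rmorph polyC b_tan) (eqmod_refl _ _).
Qed.

Lemma sos_div_circ_norm n (b : M) B0 B1 (f g : {poly M}) :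
    (size (circ_norm B0 B1) <= n)%N -> eqmod (circ R) b (circ_nf B0 B1) ->
    sos_C b -> only_real_zeros b -> sos_V f -> eqmod (circ R)%:P f (b%:P * g) ->
  sos_V g.
Proof.
elim: n b B0 B1 f => [|n IH] b B0 B1 f size_N.
  by apply: sos_div_const; apply: leq_trans size_N _.
move=> b_nf b_sos real_zeros f_sos fg.
have [size_le1|size_gt1] := leqP (size (circ_norm B0 B1)) 1.
  exact: sos_div_const size_le1 b_nf b_sos real_zeros f_sos fg.
have [b' [C0 [C1 [b'_nf size_lt b'_sos real_zeros' [f' f'_sos f'g]]]]] :=
  sos_div_descent size_gt1 b_nf b_sos real_zeros f_sos fg.
by apply: IH b'_nf b'_sos real_zeros' f'_sos f'g; rewrite -ltnS (leq_trans size_lt).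
Qed.

End Circle.

Unset Implicit Arguments.

Theorem lemma2p2 (R : realType) (f : {poly {mpoly R[2]}}) (b : {mpoly R[2]}) :
  sos_V f -> sos_C b -> only_real_zeros b ->
  forall g : {poly {mpoly R[2]}}, eqV f (b%:P * g) -> sos_V g.
Proof.
move=> f_sos b_sos real_zeros g fg.
have [B0 [B1 b_nf]] := circ_nf_exists b.
exact: sos_div_circ_norm (leqnn _) b_nf b_sos real_zeros f_sos fg.
Qed.
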